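(* Let $k$ be a positive integer and let $w_{n,k}$ denote the number of words $w_1\cdots w_n$ with all $w_i\in[n]$ containing no strictly decreasing subsequence of length $k+1$. Then for all positive integers $n,m$, $w_{n,k}\cdot w_{m,k}\le w_{n+m,k}$.
   Context: $[n]=\{1,\dots,n\}$. *)

From mathcomp Require Import all_boot.
Set Implicit Arguments. Unset Strict Implicit. Unset Printing Implicit Defensive.

(* A word w_1...w_n with letters in [n] is a function 'I_n -> 'I_n
   (position i and letter value shifted by one: letter j : 'I_n stands for j+1). *)

Definition has_dec_subseq (n l : nat) (w : {ffun 'I_n -> 'I_n}) : bool :=
  [exists s : {ffun 'I_l -> 'I_n},
     [forall a : 'I_l, forall b : 'I_l,
        (a < b) ==> ((s a < s b) && (w (s b) < w (s a)))]].

Definition wnk (n k : nat) : nat :=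
  #|[set w : {ffun 'I_n -> 'I_n} | ~~ has_dec_subseq k.+1 w]|.

From mathcomp Require Import all_boot.

(* Place a word u of length n first and a word v of length m after it, with
   every letter of v raised by n.  A strictly decreasing subsequence cannot pass
   from the low first block to the high second block, so it lies inside u or
   inside v; hence this injective concatenation sends pairs of words avoiding a
   decreasing subsequence of length k+1 to such words of length n+m. *)

Definition is_dec_subseq {n l} (w : 'I_n -> 'I_n) (s : 'I_l -> 'I_n) : Prop :=
  forall a b : 'I_l, a < b -> (s a < s b) && (w (s b) < w (s a)).

Lemma has_dec_subseqP {n l} (w : {ffun 'I_n -> 'I_n}) :
  reflect (exists s : 'I_l -> 'I_n, is_dec_subseq w s) (has_dec_subseq l w).
Proof.
apply: (iffP existsP) => [[s /forallP hs] | [s hs]].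
  by exists s => a b; move: (hs a) => /forallP /(_ b) /implyP.
exists [ffun a => s a]; apply/forallP => a; apply/forallP => b.
by apply/implyP => /hs; rewrite !ffunE.
Qed.

Lemma is_dec_subseq_pullback {n N l} {w : 'I_n -> 'I_n} {W : 'I_N -> 'I_N}
    (e f : 'I_n -> 'I_N) {s : 'I_l -> 'I_N} {t : 'I_l -> 'I_n} :
  {mono e : i j / i < j} -> {mono f : x y / x < y} ->
  (forall i, W (e i) = f (w i)) -> (forall a, s a = e (t a)) ->
  is_dec_subseq W s -> is_dec_subseq w t.
Proof.
move=> e_mono f_mono We st hs a b /hs.
by rewrite !st !We e_mono f_mono.
Qed.

Section Concatenation.

Context {n m : nat}.

Definition cat_word (u : {ffun 'I_n -> 'I_n}) (v : {ffun 'I_m -> 'I_m}) :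
    {ffun 'I_(n + m) -> 'I_(n + m)} :=
  [ffun i => match split i with
             | inl a => lshift m (u a)
             | inr b => rshift n (v b)
             end].

Variables (u : {ffun 'I_n -> 'I_n}) (v : {ffun 'I_m -> 'I_m}).

Lemma cat_word_lshift (i : 'I_n) : cat_word u v (lshift m i) = lshift m (u i).
Proof. by rewrite ffunE (unsplitK (inl _)). Qed.

Lemma cat_word_rshift (j : 'I_m) : cat_word u v (rshift n j) = rshift n (v j).
Proof. by rewrite ffunE (unsplitK (inr _)). Qed.

Lemma cat_word_ltn (i : 'I_(n + m)) : (cat_word u v i < n) = (i < n).
Proof.
rewrite -(splitK i); case: (split i) => [a | b].
  by rewrite cat_word_lshift /= !ltn_ord.
by rewrite cat_word_rshift /= !ltnNge !leq_addr.
Qed.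

Lemma cat_word_descent_ltn (i j : 'I_(n + m)) :
  i < j -> cat_word u v j < cat_word u v i -> (i < n) = (j < n).
Proof.
move=> ij; case: (ltnP i n) => [i_lo | i_hi] ji.
  by rewrite -cat_word_ltn (ltn_trans ji) ?cat_word_ltn.
by apply/esym/negbTE; rewrite -leqNgt (leq_trans i_hi (ltnW ij)).
Qed.

Lemma cat_word_dec_subseq_ltn {l} {s : 'I_l.+1 -> 'I_(n + m)} (a : 'I_l.+1) :
  is_dec_subseq (cat_word u v) s -> (s a < n) = (s ord0 < n).
Proof.
move=> hs; case: (posnP a) => [a0 | a_gt0].
  by congr (s _ < n); apply: val_inj.
by have /andP[] := hs ord0 a a_gt0 => /cat_word_descent_ltn h /h ->.
Qed.

Lemma cat_word_free l :
  ~~ has_dec_subseq l.+1 u -> ~~ has_dec_subseq l.+1 v ->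
  ~~ has_dec_subseq l.+1 (cat_word u v).
Proof.
move=> /has_dec_subseqP u_free /has_dec_subseqP v_free.
apply/has_dec_subseqP => -[s hs].
have side a := cat_word_dec_subseq_ltn a hs.
case: (ltnP (s ord0) n) => s0n.
  have lo a : s a < n by rewrite side.
  apply: u_free; exists (fun a => Ordinal (lo a)).
  apply: (is_dec_subseq_pullback (lshift m) (lshift m) _ _ _ _ hs).
  - by [].
  - by [].
  - exact: cat_word_lshift.
  - by move=> a; apply: val_inj.
have hi a : s a - n < m.
  by rewrite ltn_subLR; [exact: ltn_ord | rewrite leqNgt side -leqNgt].
apply: v_free; exists (fun a => Ordinal (hi a)).
apply: (is_dec_subseq_pullback (@rshift n m) (@rshift n m) _ _ _ _ hs).
- by move=> x y; rewrite /= ltn_add2l.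
- by move=> x y; rewrite /= ltn_add2l.
- exact: cat_word_rshift.
- by move=> a; apply: val_inj; rewrite /= subnKC // leqNgt side -leqNgt.
Qed.

End Concatenation.

Lemma cat_word_inj n m :
  injective (fun p : {ffun 'I_n -> 'I_n} * {ffun 'I_m -> 'I_m} => cat_word p.1 p.2).
Proof.
move=> [u v] [u' v'] /= e; congr pair; apply/ffunP => i.
  by apply: (@lshift_inj n m); rewrite -(cat_word_lshift u v) e cat_word_lshift.
by apply: (@rshift_inj n m); rewrite -(cat_word_rshift u v) e cat_word_rshift.
Qed.

Theorem lemma3p5 (k n m : nat) : 0 < k -> 0 < n -> 0 < m ->
  wnk n k * wnk m k <= wnk (n + m) k.
Proof.
move=> _ _ _; rewrite /wnk -cardsX -(card_imset _ (@cat_word_inj n m)).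
apply/subset_leq_card/subsetP => w /imsetP[[u v]].
rewrite !inE /= => /andP[u_free v_free] ->.
exact: cat_word_free.
Qed.
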